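(* Let $\Gamma$ be an environment as in the context and let $c_1,c_2,c_1',c_2'$ be finite sets of constraints with $(c_1,c_2)\longrightarrow_\Gamma^* (c_1',c_2')$. Then: (i) for every $x\in\mathrm{dom}(\phi_\ell(c_1'\cup c_2'))$ there exists a recipe $R$ with $\mathrm{vars}(R)\subseteq \mathrm{dom}(\phi^\Gamma_{\mathtt{LL}}\cup\phi_\ell(c_1\cup c_2))$ such that $\phi_\ell(c_1'\cup c_2')(x) = (R(\phi^\Gamma_{\mathtt{LL}}\cup\phi_\ell(c_1\cup c_2)))\downarrow$ and $\phi_r(c_1'\cup c_2')(x) = (R(\phi^\Gamma_{\mathtt{LL}}\cup\phi_r(c_1\cup c_2)))\downarrow$; (ii) conversely, for every $x\in\mathrm{dom}(\phi_\ell(c_1\cup c_2))$ there exists a recipe $R$ in which none of the symbols $\mathtt{dec},\mathtt{adec},\mathtt{checksign},\pi_1,\pi_2$ occurs, with $\mathrm{vars}(R)\subseteq \mathrm{dom}(\phi^\Gamma_{\mathtt{LL}}\cup\phi_\ell(c_1'\cup c_2'))$, such that $\phi_\ell(c_1\cup c_2)(x) = R(\phi^\Gamma_{\mathtt{LL}}\cup\phi_\ell(c_1'\cup c_2'))$ and $\phi_r(c_1\cup c_2)(x) = R(\phi^\Gamma_{\mathtt{LL}}\cup\phi_r(c_1'\cup c_2'))$.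
   Context: Fix disjoint infinite sets: names $\mathcal{N}=\mathcal{FN}\uplus\mathcal{BN}$ (free names, usable by the attacker, and bound names), keys $\mathcal{K}$, constants $\mathcal{C}$, variables $\mathcal{V}=\mathcal{X}\uplus\mathcal{AX}$. Constructors are $\mathtt{pk},\mathtt{vk},\mathtt{h}$ (unary) and $\mathtt{enc},\mathtt{aenc},\mathtt{sign},\langle\cdot,\cdot\rangle$ (binary); destructors are $\pi_1,\pi_2$ (unary) and $\mathtt{dec},\mathtt{adec},\mathtt{checksign}$ (binary). Terms are built from these symbols over $\mathcal{N}\cup\mathcal{K}\cup\mathcal{C}\cup\mathcal{V}$. A message is a term using only constructors, constants, names, keys and variables, such that every subterm $\mathtt{pk}(t'),\mathtt{vk}(t'),\mathtt{enc}(t_1,t'),\mathtt{sign}(t_1,t')$ has $t'\in\mathcal{K}$ and every subterm $\mathtt{aenc}(t_1,t_2)$ has $t_2=\mathtt{pk}(k)$ with $k\in\mathcal{K}$. The evaluation $t\downarrow$ (a term or the failure value $\bot$) is: $u\downarrow=u$ for $u\in\mathcal{N}\cup\mathcal{V}\cup\mathcal{K}\cup\mathcal{C}$; $\mathtt{pk}(t)\downarrow=\mathtt{pk}(t\downarrow)$ and $\mathtt{vk}(t)\downarrow=\mathtt{vk}(t\downarrow)$ if $t\downarrow\in\mathcal{K}$; $\mathtt{h}(t)\downarrow=\mathtt{h}(t\downarrow)$ if $t\downarrow\neq\bot$; $\langle t_1,t_2\rangle\downarrow=\langle t_1\downarrow,t_2\downarrow\rangle$ if both are $\neq\bot$; $\mathtt{enc}(t_1,t_2)\downarrow=\mathtt{enc}(t_1\downarrow,t_2\downarrow)$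 and $\mathtt{sign}(t_1,t_2)\downarrow=\mathtt{sign}(t_1\downarrow,t_2\downarrow)$ if $t_1\downarrow\neq\bot$ and $t_2\downarrow\in\mathcal{K}$; $\mathtt{aenc}(t_1,t_2)\downarrow=\mathtt{aenc}(t_1\downarrow,t_2\downarrow)$ if $t_1\downarrow\neq\bot$ and $t_2\downarrow=\mathtt{pk}(k)$ for some $k\in\mathcal{K}$; $\pi_1(t)\downarrow=t_1$ and $\pi_2(t)\downarrow=t_2$ if $t\downarrow=\langle t_1,t_2\rangle$; $\mathtt{dec}(t_1,t_2)\downarrow=t_3$ if $t_1\downarrow=\mathtt{enc}(t_3,t_4)$ and $t_4=t_2\downarrow$; $\mathtt{adec}(t_1,t_2)\downarrow=t_3$ if $t_1\downarrow=\mathtt{aenc}(t_3,\mathtt{pk}(t_4))$ and $t_4=t_2\downarrow$; $\mathtt{checksign}(t_1,t_2)\downarrow=t_3$ if $t_1\downarrow=\mathtt{sign}(t_3,t_4)$ and $t_2\downarrow=\mathtt{vk}(t_4)$; and $t\downarrow=\bot$ in all other cases. A recipe is a term built from constructors, destructors, constants and names in $\mathcal{FN}$ over variables in $\mathcal{AX}$. A frame is a substitution $\phi$ with $\mathrm{dom}(\phi)\subseteq\mathcal{AX}$; $R(\phi)$ denotes the application of $\phi$ to $R$. The environment $\Gamma$ assigns to finitely many keys $k$ a key type $\mathrm{key}^{l}(T)$ and to finitely many nonces $n$ a nonce type $\tau^{l,a}_n$, with labels $l\in\{\mathtt{LL},\mathtt{HL},\mathtt{HH}\}$ and $a\in\{1,\infty\}$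 (only the labels matter here). $\phi^\Gamma_{\mathtt{LL}}$ is a frame (on fresh variables) whose range consists exactly of: every key $k$ with $\Gamma(k)=\mathrm{key}^{\mathtt{LL}}(T)$ for some $T$; $\mathtt{pk}(k)$ and $\mathtt{vk}(k)$ for every key $k\in\mathrm{dom}(\Gamma)$; every nonce $n$ with $\Gamma(n)=\tau^{\mathtt{LL},a}_n$ for some $a$. A constraint is a pair of messages written $u\sim v$. For a finite set $c$ of constraints, $\phi_\ell(c)$ and $\phi_r(c)$ are frames with a common domain, a set of variables of $\mathcal{AX}$ disjoint from $\mathrm{dom}(\phi^\Gamma_{\mathtt{LL}})$ and in bijection with $c$, such that the variable associated with $u\sim v$ is mapped to $u$ by $\phi_\ell(c)$ and to $v$ by $\phi_r(c)$. The relation $\longrightarrow_\Gamma$ on pairs of sets of constraints is defined by (for all $c,c',M,N,M',N'$): $(\{\langle M,N\rangle\sim\langle M',N'\rangle\}\cup c,c')\longrightarrow_\Gamma(\{M\sim M',N\sim N'\}\cup c,c')$; if $\Gamma(k)=\mathrm{key}^{\mathtt{LL}}(T)$ for some $T$: $(\{\mathtt{enc}(M,k)\sim\mathtt{enc}(M',k)\}\cup c,c')\longrightarrow_\Gamma(\{M\sim M'\}\cup c,c')$, $(\{\mathtt{aenc}(M,\mathtt{pk}(k))\sim\mathtt{aenc}(M',\mathtt{pk}(k))\}\cup c,c')\longrightarrow_\Gamma(\{M\sim M'\}\cup c,c')$ and $(\{\mathtt{sign}(M,k)\sim\mathtt{sign}(M',k)\}\cup c,c')\longrightarrow_\Gamma(\{M\sim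 M'\}\cup c,c')$; if $\Gamma(k)=\mathrm{key}^{\mathtt{HH}}(T)$ for some $T$: $(\{\mathtt{sign}(M,k)\sim\mathtt{sign}(M',k)\}\cup c,c')\longrightarrow_\Gamma(\{M\sim M'\}\cup c,\{\mathtt{sign}(M,k)\sim\mathtt{sign}(M',k)\}\cup c')$. $\longrightarrow_\Gamma^*$ is its reflexive transitive closure. *)

From Stdlib Require Import List Bool Arith Relations.
Import ListNotations.
Set Implicit Arguments.

Inductive name := FN (n : nat) | BN (n : nat).
Inductive atom := AName (n : name) | AKey (k : nat) | AConst (c : nat).
Inductive var := XV (n : nat) | AXV (n : nat).

Inductive term (V : Type) :=
| TAtom (a : atom)
| TVar (v : V)
| TPk (t : term V) | TVk (t : term V) | THash (t : term V)
| TEnc (t1 t2 : term V) | TAenc (t1 t2 : term V) | TSign (t1 t2 : term V)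
| TPair (t1 t2 : term V)
| TPi1 (t : term V) | TPi2 (t : term V)
| TDec (t1 t2 : term V) | TAdec (t1 t2 : term V) | TChecksign (t1 t2 : term V).
Arguments TAtom {V}. Arguments TVar {V}. Arguments TPk {V}. Arguments TVk {V}.
Arguments THash {V}. Arguments TEnc {V}. Arguments TAenc {V}. Arguments TSign {V}.
Arguments TPair {V}. Arguments TPi1 {V}. Arguments TPi2 {V}. Arguments TDec {V}.
Arguments TAdec {V}. Arguments TChecksign {V}.

Definition name_eq_dec (x y : name) : {x = y} + {x <> y}.
Proof. decide equality; apply Nat.eq_dec. Defined.
Definition atom_eq_dec (x y : atom) : {x = y} + {x <> y}.
Proof. decide equality; try apply Nat.eq_dec; apply name_eq_dec. Defined.
Definition var_eq_dec (x y : var) : {x = y} + {x <> y}.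
Proof. decide equality; apply Nat.eq_dec. Defined.
Definition term_eq_dec (V : Type) (HV : forall x y : V, {x = y} + {x <> y})
  (x y : term V) : {x = y} + {x <> y}.
Proof. decide equality; first [apply atom_eq_dec | apply HV]. Defined.

Definition msg := term var.
Definition msg_eq_dec : forall x y : msg, {x = y} + {x <> y} := term_eq_dec var_eq_dec.

Definition key (k : nat) : msg := TAtom (AKey k).
Definition is_key (t : msg) : Prop := exists k, t = key k.

Fixpoint is_message (t : msg) : Prop :=
  match t with
  | TAtom _ | TVar _ => True
  | TPk t' | TVk t' => is_key t'
  | THash t' => is_message t'
  | TEnc t1 t2 | TSign t1 t2 => is_message t1 /\ is_key t2
  | TAenc t1 t2 => is_message t1 /\ exists k, t2 = TPk (key k)
  | TPair t1 t2 => is_message t1 /\ is_message t2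
  | _ => False
  end.

(* ---------- Evaluation t↓ (None stands for ⊥) ---------- *)
Fixpoint eval (t : msg) : option msg :=
  match t with
  | TAtom a => Some (TAtom a)
  | TVar x => Some (TVar x)
  | TPk t' => match eval t' with Some (TAtom (AKey k)) => Some (TPk (key k)) | _ => None end
  | TVk t' => match eval t' with Some (TAtom (AKey k)) => Some (TVk (key k)) | _ => None end
  | THash t' => match eval t' with Some u => Some (THash u) | None => None end
  | TPair t1 t2 =>
      match eval t1, eval t2 with Some u1, Some u2 => Some (TPair u1 u2) | _, _ => None end
  | TEnc t1 t2 =>
      match eval t1, eval t2 with
      | Some u1, Some (TAtom (AKey k)) => Some (TEnc u1 (key k)) | _, _ => None end
  | TSign t1 t2 =>
      match eval t1, eval t2 with
      | Some u1, Some (TAtom (AKey k)) => Some (TSign u1 (key k)) | _, _ => None end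
  | TAenc t1 t2 =>
      match eval t1, eval t2 with
      | Some u1, Some (TPk (TAtom (AKey k))) => Some (TAenc u1 (TPk (key k)))
      | _, _ => None end
  | TPi1 t' => match eval t' with Some (TPair u1 _) => Some u1 | _ => None end
  | TPi2 t' => match eval t' with Some (TPair _ u2) => Some u2 | _ => None end
  | TDec t1 t2 =>
      match eval t1, eval t2 with
      | Some (TEnc t3 t4), Some u => if msg_eq_dec t4 u then Some t3 else None
      | _, _ => None end
  | TAdec t1 t2 =>
      match eval t1, eval t2 with
      | Some (TAenc t3 (TPk t4)), Some u => if msg_eq_dec t4 u then Some t3 else None
      | _, _ => None end
  | TChecksign t1 t2 =>
      match eval t1, eval t2 with
      | Some (TSign t3 t4), Some (TVk u) => if msg_eq_dec t4 u then Some t3 else None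
      | _, _ => None end
  end.

(* ---------- Environment (only labels matter) ---------- *)
Inductive label := LL | HL | HH.
Definition label_eq_dec (x y : label) : {x = y} + {x <> y}.
Proof. decide equality. Defined.

Record env := mkEnv {
  gkey : nat -> option label;     (* Γ(k) = key^l(T)  ↦  Some l *)
  gnonce : name -> option label   (* Γ(n) = τ^{l,a}_n  ↦  Some l *)
}.

Definition env_finite (G : env) : Prop :=
  exists (lk : list nat) (ln : list name),
    (forall k, gkey G k <> None -> In k lk) /\ (forall n, gnonce G n <> None -> In n ln).

Definition constraint := (msg * msg)%type.
Definition constraint_eq_dec (x y : constraint) : {x = y} + {x <> y}.
Proof. decide equality; apply msg_eq_dec. Defined.
Definition is_constraint (p : constraint) : Prop := is_message (fst p) /\ is_message (snd p).

(* Recipe (AX) variables: RLL t is the variable of phi^Γ_LL whose value is t;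
   RC u v is the variable associated with the constraint u ~ v. *)
Inductive rvar := RLL (t : msg) | RC (u v : msg).
Definition recipe := term rvar.

Fixpoint is_recipe (R : recipe) : Prop :=
  match R with
  | TAtom (AName (FN _)) | TAtom (AConst _) => True
  | TAtom _ => False
  | TVar _ => True
  | TPk t | TVk t | THash t | TPi1 t | TPi2 t => is_recipe t
  | TEnc t1 t2 | TAenc t1 t2 | TSign t1 t2 | TPair t1 t2
  | TDec t1 t2 | TAdec t1 t2 | TChecksign t1 t2 => is_recipe t1 /\ is_recipe t2
  end.

Fixpoint no_destructor (R : recipe) : Prop :=
  match R with
  | TAtom _ | TVar _ => True
  | TPk t | TVk t | THash t => no_destructor t
  | TEnc t1 t2 | TAenc t1 t2 | TSign t1 t2 | TPair t1 t2 => no_destructor t1 /\ no_destructor t2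
  | _ => False
  end.

Fixpoint rvars_in (P : rvar -> Prop) (R : recipe) : Prop :=
  match R with
  | TAtom _ => True
  | TVar x => P x
  | TPk t | TVk t | THash t | TPi1 t | TPi2 t => rvars_in P t
  | TEnc t1 t2 | TAenc t1 t2 | TSign t1 t2 | TPair t1 t2
  | TDec t1 t2 | TAdec t1 t2 | TChecksign t1 t2 => rvars_in P t1 /\ rvars_in P t2
  end.

Definition frame := rvar -> option msg.
Definition in_dom (phi : frame) (x : rvar) : Prop := phi x <> None.
Definition funion (phi1 phi2 : frame) : frame :=
  fun x => match phi1 x with Some t => Some t | None => phi2 x end.

Fixpoint apply_frame (phi : frame) (R : recipe) : option msg :=
  let un f t := match apply_frame phi t with Some u => Some (f u) | None => None end in
  let bin f t1 t2 := match apply_frame phi t1, apply_frame phi t2 with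
                     | Some u1, Some u2 => Some (f u1 u2) | _, _ => None end in
  match R with
  | TAtom a => Some (TAtom a)
  | TVar x => phi x
  | TPk t => un TPk t | TVk t => un TVk t | THash t => un THash t
  | TPi1 t => un TPi1 t | TPi2 t => un TPi2 t
  | TEnc t1 t2 => bin TEnc t1 t2 | TAenc t1 t2 => bin TAenc t1 t2
  | TSign t1 t2 => bin TSign t1 t2 | TPair t1 t2 => bin TPair t1 t2
  | TDec t1 t2 => bin TDec t1 t2 | TAdec t1 t2 => bin TAdec t1 t2
  | TChecksign t1 t2 => bin TChecksign t1 t2
  end.

Definition eval_frame (phi : frame) (R : recipe) : option msg :=
  match apply_frame phi R with Some t => eval t | None => None end.

Definition inLL (G : env) (t : msg) : bool :=
  match t with
  | TAtom (AKey k) => match gkey G k with Some LL => true | _ => false end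
  | TAtom (AName n) => match gnonce G n with Some LL => true | _ => false end
  | TPk (TAtom (AKey k)) | TVk (TAtom (AKey k)) =>
      match gkey G k with Some _ => true | None => false end
  | _ => false
  end.

Definition phiLL (G : env) : frame :=
  fun x => match x with RLL t => if inLL G t then Some t else None | RC _ _ => None end.

Definition phi_l (c : list constraint) : frame :=
  fun x => match x with
           | RC u v => if in_dec constraint_eq_dec (u, v) c then Some u else None
           | RLL _ => None end.
Definition phi_r (c : list constraint) : frame :=
  fun x => match x with
           | RC u v => if in_dec constraint_eq_dec (u, v) c then Some v else None
           | RLL _ => None end.

(* Finite sets are represented by lists, compared up to set equality. *)
Definition cstate := (list constraint * list constraint)%type.

Inductive step (G : env) : cstate -> cstate -> Prop :=
| step_pair M N M' N' c c' :
    step G ((TPair M N, TPair M' N') :: c, c') ((M, M') :: (N, N') :: c, c')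
| step_enc k M M' c c' : gkey G k = Some LL ->
    step G ((TEnc M (key k), TEnc M' (key k)) :: c, c') ((M, M') :: c, c')
| step_aenc k M M' c c' : gkey G k = Some LL ->
    step G ((TAenc M (TPk (key k)), TAenc M' (TPk (key k))) :: c, c') ((M, M') :: c, c')
| step_sign_LL k M M' c c' : gkey G k = Some LL ->
    step G ((TSign M (key k), TSign M' (key k)) :: c, c') ((M, M') :: c, c')
| step_sign_HH k M M' c c' : gkey G k = Some HH ->
    step G ((TSign M (key k), TSign M' (key k)) :: c, c')
           ((M, M') :: c, (TSign M (key k), TSign M' (key k)) :: c').

Definition seteq (l1 l2 : list constraint) : Prop := forall p, In p l1 <-> In p l2.
Definition seteq2 (s1 s2 : cstate) : Prop := seteq (fst s1) (fst s2) /\ seteq (snd s1) (snd s2).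

Definition step_set (G : env) (s1 s2 : cstate) : Prop :=
  exists s1' s2', seteq2 s1 s1' /\ seteq2 s2 s2' /\ step G s1' s2'.

Definition steps (G : env) : cstate -> cstate -> Prop :=
  clos_refl_trans cstate (fun s1 s2 => seteq2 s1 s2 \/ step_set G s1 s2).

From Stdlib Require Import List.

(* A transition replaces a constraint by its components: those of a pair, the plaintext
   under an LL key, or the message signed with an LL or HH key.  A component is recovered
   from the replaced constraint by the matching destructor, whose key (k or vk(k)) is in
   phi_LL; conversely the replaced constraint is rebuilt from its components by the
   matching constructor, with k or pk(k) from phi_LL (an HH-signed constraint is never
   removed).  Both relations between old and new frames are transitive because recipes
   compose: substituting recipes for the variables of a recipe gives a recipe computing
   the composed values. *)

(* [(R phi)↓] evaluated bottom-up, the variables being read in [val]; on frames of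
   messages it agrees with [eval_frame] (lemma [eval_frame_eval_recipe]), and unlike
   [eval_frame] it is compatible with substituting recipes for variables. *)
Fixpoint eval_recipe (val : frame) (R : recipe) : option msg :=
  match R with
  | TAtom a => Some (TAtom a)
  | TVar x => val x
  | TPk t =>
      match eval_recipe val t with Some (TAtom (AKey k)) => Some (TPk (key k)) | _ => None end
  | TVk t =>
      match eval_recipe val t with Some (TAtom (AKey k)) => Some (TVk (key k)) | _ => None end
  | THash t => match eval_recipe val t with Some u => Some (THash u) | None => None end
  | TPair t1 t2 =>
      match eval_recipe val t1, eval_recipe val t2 with
      | Some u1, Some u2 => Some (TPair u1 u2) | _, _ => None end
  | TEnc t1 t2 =>
      match eval_recipe val t1, eval_recipe val t2 with
      | Some u1, Some (TAtom (AKey k)) => Some (TEnc u1 (key k)) | _, _ => None end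
  | TSign t1 t2 =>
      match eval_recipe val t1, eval_recipe val t2 with
      | Some u1, Some (TAtom (AKey k)) => Some (TSign u1 (key k)) | _, _ => None end
  | TAenc t1 t2 =>
      match eval_recipe val t1, eval_recipe val t2 with
      | Some u1, Some (TPk (TAtom (AKey k))) => Some (TAenc u1 (TPk (key k)))
      | _, _ => None end
  | TPi1 t => match eval_recipe val t with Some (TPair u1 _) => Some u1 | _ => None end
  | TPi2 t => match eval_recipe val t with Some (TPair _ u2) => Some u2 | _ => None end
  | TDec t1 t2 =>
      match eval_recipe val t1, eval_recipe val t2 with
      | Some (TEnc t3 t4), Some u => if msg_eq_dec t4 u then Some t3 else None
      | _, _ => None end
  | TAdec t1 t2 =>
      match eval_recipe val t1, eval_recipe val t2 with
      | Some (TAenc t3 (TPk t4)), Some u => if msg_eq_dec t4 u then Some t3 else None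
      | _, _ => None end
  | TChecksign t1 t2 =>
      match eval_recipe val t1, eval_recipe val t2 with
      | Some (TSign t3 t4), Some (TVk u) => if msg_eq_dec t4 u then Some t3 else None
      | _, _ => None end
  end.

Lemma eval_message t : is_message t -> eval t = Some t.
Proof.
  induction t; simpl; intros H; try tauto.
  - destruct H as [k ->]; reflexivity.
  - destruct H as [k ->]; reflexivity.
  - rewrite IHt; auto.
  - destruct H as [H1 [k ->]]; rewrite IHt1; auto.
  - destruct H as [H1 [k ->]]; rewrite IHt1; auto.
  - destruct H as [H1 [k ->]]; rewrite IHt1; auto.
  - destruct H as [H1 H2]; rewrite IHt1, IHt2; auto.
Qed.

Lemma eval_frame_eval_recipe phi R :
  (forall x t, phi x = Some t -> is_message t) -> eval_frame phi R = eval_recipe phi R.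
Proof.
  intro Hphi; unfold eval_frame; induction R; simpl.
  1: reflexivity.
  1: destruct (phi v) eqn:E; [apply eval_message; eapply Hphi; eauto | reflexivity].
  all: repeat match goal with
       | IH : match apply_frame ?f ?R with _ => _ end = _ |- _ =>
           destruct (apply_frame f R); rewrite <- IH; clear IH
       end; simpl;
       repeat match goal with |- context [match ?e with _ => _ end] => destruct e end;
       reflexivity.
Qed.

Definition derives (A A' : frame) (o o' : option msg) : Prop :=
  exists R, is_recipe R /\ rvars_in (in_dom A) R /\
    o = eval_recipe A R /\ o' = eval_recipe A' R.

Definition constructs (A A' : frame) (o o' : option msg) : Prop :=
  exists R, is_recipe R /\ no_destructor R /\ rvars_in (in_dom A) R /\
    o = apply_frame A R /\ o' = apply_frame A' R.

Lemma derives_compose (A A' B B' : frame) :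
  (forall x, in_dom B x -> derives A A' (B x) (B' x)) ->
  forall R, is_recipe R -> rvars_in (in_dom B) R ->
  derives A A' (eval_recipe B R) (eval_recipe B' R).
Proof.
  intros HB R; induction R; cbn [is_recipe rvars_in]; intros HR HV.
  1: exists (TAtom a); auto.
  1: exact (HB v HV).
  all: repeat match goal with
       | IH : is_recipe ?R -> rvars_in _ ?R -> derives _ _ _ _ |- _ =>
           destruct IH as (? & ? & ? & ? & ?); [tauto | tauto |]
       end.
  (* the recipe over [A] is [R] with each variable replaced by its recipe *)
  all: lazymatch goal with
       | E1 : eval_recipe _ ?R1 = eval_recipe _ ?Q1,
         E2 : eval_recipe _ ?R2 = eval_recipe _ ?Q2
         |- derives _ _ (eval_recipe _ (?C ?R1 ?R2)) _ => exists (C Q1 Q2)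
       | E1 : eval_recipe _ ?R1 = eval_recipe _ ?Q1
         |- derives _ _ (eval_recipe _ (?C ?R1)) _ => exists (C Q1)
       end;
  cbn; repeat split; try tauto;
  repeat match goal with E : eval_recipe _ _ = eval_recipe _ _ |- _ => rewrite E; clear E end;
  reflexivity.
Qed.

Lemma constructs_compose (A A' B B' : frame) :
  (forall x, in_dom B x -> constructs A A' (B x) (B' x)) ->
  forall R, is_recipe R -> no_destructor R -> rvars_in (in_dom B) R ->
  constructs A A' (apply_frame B R) (apply_frame B' R).
Proof.
  intros HB R; induction R; cbn [is_recipe no_destructor rvars_in]; intros HR HN HV;
    try contradiction.
  1: exists (TAtom a); cbn; auto.
  1: exact (HB v HV).
  all: repeat match goal with
       | IH : is_recipe ?R -> no_destructor ?R -> rvars_in _ ?R -> constructs _ _ _ _ |- _ =>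
           destruct IH as (? & ? & ? & ? & ? & ?); [tauto | tauto | tauto |]
       end.
  all: lazymatch goal with
       | E1 : apply_frame _ ?R1 = apply_frame _ ?Q1,
         E2 : apply_frame _ ?R2 = apply_frame _ ?Q2
         |- constructs _ _ (apply_frame _ (?C ?R1 ?R2)) _ => exists (C Q1 Q2)
       | E1 : apply_frame _ ?R1 = apply_frame _ ?Q1
         |- constructs _ _ (apply_frame _ (?C ?R1)) _ => exists (C Q1)
       end;
  cbn; repeat split; try tauto;
  repeat match goal with E : apply_frame _ _ = apply_frame _ _ |- _ => rewrite E; clear E end;
  reflexivity.
Qed.

Lemma derives_var (A A' : frame) x u v :
  A x = Some u /\ A' x = Some v -> derives A A' (Some u) (Some v).
Proof.
  intros [Hu Hv]; exists (TVar x); cbn; unfold in_dom; rewrite Hu, Hv.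
  repeat split; congruence.
Qed.

Lemma constructs_var (A A' : frame) x u v :
  A x = Some u /\ A' x = Some v -> constructs A A' (Some u) (Some v).
Proof.
  intros [Hu Hv]; exists (TVar x); cbn; unfold in_dom; rewrite Hu, Hv.
  repeat split; congruence.
Qed.

Lemma derives_pi1 (A A' : frame) M N M' N' :
  derives A A' (Some (TPair M N)) (Some (TPair M' N')) -> derives A A' (Some M) (Some M').
Proof.
  intros (R & HR & HV & E & E'); exists (TPi1 R); cbn; rewrite <- E, <- E'; auto.
Qed.

Lemma derives_pi2 (A A' : frame) M N M' N' :
  derives A A' (Some (TPair M N)) (Some (TPair M' N')) -> derives A A' (Some N) (Some N').
Proof.
  intros (R & HR & HV & E & E'); exists (TPi2 R); cbn; rewrite <- E, <- E'; auto.
Qed.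

Lemma derives_dec (A A' : frame) M M' K :
  derives A A' (Some (TEnc M K)) (Some (TEnc M' K)) -> derives A A' (Some K) (Some K) ->
  derives A A' (Some M) (Some M').
Proof.
  intros (R1 & HR1 & HV1 & E1 & E1') (R2 & HR2 & HV2 & E2 & E2').
  exists (TDec R1 R2); cbn; rewrite <- E1, <- E1', <- E2, <- E2'.
  destruct (msg_eq_dec K K) as [_ | []]; auto.
Qed.

Lemma derives_adec (A A' : frame) M M' K :
  derives A A' (Some (TAenc M (TPk K))) (Some (TAenc M' (TPk K))) ->
  derives A A' (Some K) (Some K) -> derives A A' (Some M) (Some M').
Proof.
  intros (R1 & HR1 & HV1 & E1 & E1') (R2 & HR2 & HV2 & E2 & E2').
  exists (TAdec R1 R2); cbn; rewrite <- E1, <- E1', <- E2, <- E2'.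
  destruct (msg_eq_dec K K) as [_ | []]; auto.
Qed.

Lemma derives_checksign (A A' : frame) M M' K :
  derives A A' (Some (TSign M K)) (Some (TSign M' K)) ->
  derives A A' (Some (TVk K)) (Some (TVk K)) -> derives A A' (Some M) (Some M').
Proof.
  intros (R1 & HR1 & HV1 & E1 & E1') (R2 & HR2 & HV2 & E2 & E2').
  exists (TChecksign R1 R2); cbn; rewrite <- E1, <- E1', <- E2, <- E2'.
  destruct (msg_eq_dec K K) as [_ | []]; auto.
Qed.

Lemma constructs_pair (A A' : frame) M N M' N' :
  constructs A A' (Some M) (Some M') -> constructs A A' (Some N) (Some N') ->
  constructs A A' (Some (TPair M N)) (Some (TPair M' N')).
Proof.
  intros (R1 & ? & ? & ? & E1 & E1') (R2 & ? & ? & ? & E2 & E2').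
  exists (TPair R1 R2); cbn; rewrite <- E1, <- E1', <- E2, <- E2'; tauto.
Qed.

Lemma constructs_enc (A A' : frame) M K M' K' :
  constructs A A' (Some M) (Some M') -> constructs A A' (Some K) (Some K') ->
  constructs A A' (Some (TEnc M K)) (Some (TEnc M' K')).
Proof.
  intros (R1 & ? & ? & ? & E1 & E1') (R2 & ? & ? & ? & E2 & E2').
  exists (TEnc R1 R2); cbn; rewrite <- E1, <- E1', <- E2, <- E2'; tauto.
Qed.

Lemma constructs_aenc (A A' : frame) M K M' K' :
  constructs A A' (Some M) (Some M') -> constructs A A' (Some K) (Some K') ->
  constructs A A' (Some (TAenc M K)) (Some (TAenc M' K')).
Proof.
  intros (R1 & ? & ? & ? & E1 & E1') (R2 & ? & ? & ? & E2 & E2').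
  exists (TAenc R1 R2); cbn; rewrite <- E1, <- E1', <- E2, <- E2'; tauto.
Qed.

Lemma constructs_sign (A A' : frame) M K M' K' :
  constructs A A' (Some M) (Some M') -> constructs A A' (Some K) (Some K') ->
  constructs A A' (Some (TSign M K)) (Some (TSign M' K')).
Proof.
  intros (R1 & ? & ? & ? & E1 & E1') (R2 & ? & ? & ? & E2 & E2').
  exists (TSign R1 R2); cbn; rewrite <- E1, <- E1', <- E2, <- E2'; tauto.
Qed.

Section Frames.

Variable G : env.

Definition lframe (c : list constraint) : frame := funion (phiLL G) (phi_l c).
Definition rframe (c : list constraint) : frame := funion (phiLL G) (phi_r c).

Lemma frames_constraint c u v :
  In (u, v) c -> lframe c (RC u v) = Some u /\ rframe c (RC u v) = Some v.
Proof.
  intro Hin; unfold lframe, rframe, funion, phi_l, phi_r; cbn.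
  destruct (in_dec constraint_eq_dec (u, v) c); tauto.
Qed.

Lemma in_dom_lframe_constraint c u v : in_dom (lframe c) (RC u v) -> In (u, v) c.
Proof.
  unfold in_dom, lframe, funion, phi_l; cbn.
  destruct (in_dec constraint_eq_dec (u, v) c); tauto.
Qed.

Lemma frames_LL c t :
  lframe c (RLL t) = phiLL G (RLL t) /\ rframe c (RLL t) = phiLL G (RLL t).
Proof. unfold lframe, rframe, funion; destruct (phiLL G (RLL t)); split; reflexivity. Qed.

Lemma phiLL_key k : gkey G k = Some LL -> phiLL G (RLL (key k)) = Some (key k).
Proof. intro Hk; cbn; rewrite Hk; reflexivity. Qed.

Lemma phiLL_pk k l : gkey G k = Some l -> phiLL G (RLL (TPk (key k))) = Some (TPk (key k)).
Proof. intro Hk; cbn; rewrite Hk; reflexivity. Qed.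

Lemma phiLL_vk k l : gkey G k = Some l -> phiLL G (RLL (TVk (key k))) = Some (TVk (key k)).
Proof. intro Hk; cbn; rewrite Hk; reflexivity. Qed.

Lemma phiLL_message x t : phiLL G x = Some t -> is_message t.
Proof.
  destruct x as [w | u v]; cbn; [| discriminate].
  destruct (inLL G w) eqn:Hw; [intros [= <-] | discriminate].
  destruct w as [a | | w | w | | | | | | | | | |]; cbn in *; try discriminate; auto;
    destruct w as [[] | | | | | | | | | | | | |]; try discriminate; eexists; reflexivity.
Qed.

Lemma frames_message c :
  (forall p, In p c -> is_constraint p) ->
  forall x t, (lframe c x = Some t \/ rframe c x = Some t) -> is_message t.
Proof.
  intros Hc [w | u v] t.
  - destruct (frames_LL c w) as [-> ->]; intros [H | H]; exact (phiLL_message _ _ H).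
  - unfold lframe, rframe, funion, phi_l, phi_r; cbn.
    destruct (in_dec constraint_eq_dec (u, v) c) as [Hin | _]; [| intros [[=] | [=]]].
    apply Hc in Hin; destruct Hin; intros [[= <-] | [= <-]]; assumption.
Qed.

Lemma derives_constraint c u v :
  In (u, v) c -> derives (lframe c) (rframe c) (Some u) (Some v).
Proof. intro Hin; exact (derives_var _ _ _ _ _ (frames_constraint _ _ _ Hin)). Qed.

Lemma constructs_constraint c u v :
  In (u, v) c -> constructs (lframe c) (rframe c) (Some u) (Some v).
Proof. intro Hin; exact (constructs_var _ _ _ _ _ (frames_constraint _ _ _ Hin)). Qed.

Lemma derives_LL c t :
  phiLL G (RLL t) = Some t -> derives (lframe c) (rframe c) (Some t) (Some t).
Proof.
  intro Ht; apply derives_var with (RLL t); destruct (frames_LL c t) as [-> ->]; auto.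
Qed.

Lemma constructs_LL c t :
  phiLL G (RLL t) = Some t -> constructs (lframe c) (rframe c) (Some t) (Some t).
Proof.
  intro Ht; apply constructs_var with (RLL t); destruct (frames_LL c t) as [-> ->]; auto.
Qed.

Definition deducible_from (cs ds : list constraint) : Prop :=
  forall x, in_dom (lframe ds) x ->
  derives (lframe cs) (rframe cs) (lframe ds x) (rframe ds x).

Definition constructible_from (ds cs : list constraint) : Prop :=
  forall x, in_dom (lframe cs) x ->
  constructs (lframe ds) (rframe ds) (lframe cs x) (rframe cs x).

Lemma deducible_from_extension cs ds :
  (forall u v, In (u, v) ds ->
     In (u, v) cs \/ derives (lframe cs) (rframe cs) (Some u) (Some v)) ->
  deducible_from cs ds.
Proof.
  intros Hds [t | u v] Hx.
  - exists (TVar (RLL t)); repeat split; exact Hx.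
  - pose proof (in_dom_lframe_constraint _ _ _ Hx) as Hin.
    destruct (frames_constraint _ _ _ Hin) as [-> ->].
    destruct (Hds u v Hin) as [Hcs | Hder]; [apply derives_constraint |]; assumption.
Qed.

Lemma constructible_from_extension ds cs :
  (forall u v, In (u, v) cs ->
     In (u, v) ds \/ constructs (lframe ds) (rframe ds) (Some u) (Some v)) ->
  constructible_from ds cs.
Proof.
  intros Hcs [t | u v] Hx.
  - exists (TVar (RLL t)); repeat split; exact Hx.
  - pose proof (in_dom_lframe_constraint _ _ _ Hx) as Hin.
    destruct (frames_constraint _ _ _ Hin) as [-> ->].
    destruct (Hcs u v Hin) as [Hds | Hcons]; [apply constructs_constraint |]; assumption.
Qed.

Lemma deducible_from_trans a b c :
  deducible_from a b -> deducible_from b c -> deducible_from a c.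
Proof.
  intros Hab Hbc x Hx.
  destruct (Hbc x Hx) as (R & HR & HV & -> & ->).
  exact (derives_compose _ _ _ _ Hab R HR HV).
Qed.

Lemma constructible_from_trans a b c :
  constructible_from a b -> constructible_from b c -> constructible_from a c.
Proof.
  intros Hab Hbc x Hx.
  destruct (Hbc x Hx) as (R & HR & HN & HV & -> & ->).
  exact (constructs_compose _ _ _ _ Hab R HR HN HV).
Qed.

Definition constraints (s : cstate) : list constraint := fst s ++ snd s.

Definition simulation (s t : cstate) : Prop :=
  deducible_from (constraints s) (constraints t) /\
  constructible_from (constraints t) (constraints s).

Lemma simulation_trans s t u : simulation s t -> simulation t u -> simulation s u.
Proof.
  intros [Hd1 Hc1] [Hd2 Hc2]; split.
  - exact (deducible_from_trans _ _ _ Hd1 Hd2).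
  - exact (constructible_from_trans _ _ _ Hc2 Hc1).
Qed.

Lemma simulation_seteq2 s t : seteq2 s t -> simulation s t.
Proof.
  intros [Hfst Hsnd];
    split; [apply deducible_from_extension | apply constructible_from_extension];
    intros u v Hin; left; unfold constraints in *; rewrite in_app_iff in *; firstorder.
Qed.

Ltac old_constraint :=
  left; cbn in *; rewrite ?in_app_iff in *; cbn in *; tauto.

Lemma deducible_from_step s t : step G s t -> deducible_from (constraints s) (constraints t).
Proof.
  intro Hstep; destruct Hstep as [M N M' N' c c' | k M M' c c' Hk | k M M' c c' Hk
    | k M M' c c' Hk | k M M' c c' Hk];
    unfold constraints; cbn [fst snd]; apply deducible_from_extension.
  - intros u v [[= <- <-] | [[= <- <-] | Hin]]; [right .. | old_constraint].
    + apply derives_pi1 with N N', derives_constraint; left; reflexivity.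
    + apply derives_pi2 with M M', derives_constraint; left; reflexivity.
  - intros u v [[= <- <-] | Hin]; [right | old_constraint].
    apply derives_dec with (key k); [apply derives_constraint; left; reflexivity |].
    apply derives_LL, phiLL_key, Hk.
  - intros u v [[= <- <-] | Hin]; [right | old_constraint].
    apply derives_adec with (key k); [apply derives_constraint; left; reflexivity |].
    apply derives_LL, phiLL_key, Hk.
  - intros u v [[= <- <-] | Hin]; [right | old_constraint].
    apply derives_checksign with (key k); [apply derives_constraint; left; reflexivity |].
    apply derives_LL, (phiLL_vk _ _ Hk).
  - intros u v [[= <- <-] | Hin]; [right | old_constraint].
    apply derives_checksign with (key k); [apply derives_constraint; left; reflexivity |].
    apply derives_LL, (phiLL_vk _ _ Hk).
Qed.

Lemma constructible_from_step s t :
  step G s t -> constructible_from (constraints t) (constraints s).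
Proof.
  intro Hstep; destruct Hstep as [M N M' N' c c' | k M M' c c' Hk | k M M' c c' Hk
    | k M M' c c' Hk | k M M' c c' Hk];
    unfold constraints; cbn [fst snd]; apply constructible_from_extension.
  - intros u v [[= <- <-] | Hin]; [right | old_constraint].
    apply constructs_pair; apply constructs_constraint; cbn; tauto.
  - intros u v [[= <- <-] | Hin]; [right | old_constraint].
    apply constructs_enc; [apply constructs_constraint; left; reflexivity |].
    apply constructs_LL, phiLL_key, Hk.
  - intros u v [[= <- <-] | Hin]; [right | old_constraint].
    apply constructs_aenc; [apply constructs_constraint; left; reflexivity |].
    apply constructs_LL, (phiLL_pk _ _ Hk).
  - intros u v [[= <- <-] | Hin]; [right | old_constraint].
    apply constructs_sign; [apply constructs_constraint; left; reflexivity |].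
    apply constructs_LL, phiLL_key, Hk.
  - (* the HH-signed constraint is kept in the second component *)
    intros u v Hin; old_constraint.
Qed.

Lemma simulation_steps s t : steps G s t -> simulation s t.
Proof.
  intro Hsteps;
    induction Hsteps as [s t [Heq | (s' & t' & Hs & Ht & Hstep)] | s | s t u _ IHst _ IHtu].
  - exact (simulation_seteq2 _ _ Heq).
  - apply simulation_trans with s'; [exact (simulation_seteq2 _ _ Hs) |].
    apply simulation_trans with t';
      [split; [apply deducible_from_step | apply constructible_from_step]; exact Hstep |].
    apply simulation_seteq2; destruct Ht as [H1 H2]; split; intro p; symmetry; auto.
  - apply simulation_seteq2; split; intro p; reflexivity.
  - exact (simulation_trans _ _ _ IHst IHtu).
Qed.

End Frames.

Theorem lemmaB39 (G : env) (c1 c2 c1' c2' : list constraint) :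
  env_finite G ->
  (forall p, In p c1 -> is_constraint p) ->
  (forall p, In p c2 -> is_constraint p) ->
  (forall p, In p c1' -> is_constraint p) ->
  (forall p, In p c2' -> is_constraint p) ->
  steps G (c1, c2) (c1', c2') ->
  (forall x, in_dom (phi_l (c1' ++ c2')) x ->
     exists R : recipe,
       is_recipe R /\
       rvars_in (in_dom (funion (phiLL G) (phi_l (c1 ++ c2)))) R /\
       phi_l (c1' ++ c2') x = eval_frame (funion (phiLL G) (phi_l (c1 ++ c2))) R /\
       phi_r (c1' ++ c2') x = eval_frame (funion (phiLL G) (phi_r (c1 ++ c2))) R) /\
  (forall x, in_dom (phi_l (c1 ++ c2)) x ->
     exists R : recipe,
       is_recipe R /\ no_destructor R /\
       rvars_in (in_dom (funion (phiLL G) (phi_l (c1' ++ c2')))) R /\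
       phi_l (c1 ++ c2) x = apply_frame (funion (phiLL G) (phi_l (c1' ++ c2'))) R /\
       phi_r (c1 ++ c2) x = apply_frame (funion (phiLL G) (phi_r (c1' ++ c2'))) R).
Proof.
  intros _ Hc1 Hc2 _ _ Hsteps.
  destruct (simulation_steps G _ _ Hsteps) as [Hded Hcons].
  assert (Hmsg : forall x t,
             lframe G (c1 ++ c2) x = Some t \/ rframe G (c1 ++ c2) x = Some t -> is_message t).
  { apply frames_message; intros p; rewrite in_app_iff; intros [Hp | Hp]; auto. }
  split; intros [t | u v] Hx; try (exfalso; apply Hx; reflexivity).
  - destruct (Hded (RC u v) Hx) as (R & HR & HV & El & Er).
    exists R; rewrite !eval_frame_eval_recipe by (intros y m Hy; apply (Hmsg y); auto).
    auto.
  - exact (Hcons (RC u v) Hx).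
Qed.
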